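(* Let $B\ge1$, let $X$ be a random variable with a unimodal distribution on $G=\{0,\frac1B,\frac2B,\dots,1\}$, let $t\in G$ and $\eta:=\mathbb{E}(X)$. If $\eta\le1/3$, then \[\mathbb{P}(X\ge t)\le\begin{cases}\dfrac{2\eta-t+\frac1B}{t+\frac1B}&\text{if } t\in\bigl(\eta,\min(\tfrac32\eta+\tfrac1{2B},2\eta)\bigr],\\[2mm]\dfrac{\eta}{2t-\frac1B}&\text{if } t\in\bigl(\min(\tfrac32\eta+\tfrac1{2B},2\eta),\tfrac12\bigr],\\[2mm]\dfrac{2\eta(1-t+\frac1B)}{1+\frac1B}&\text{if } t\in(\tfrac12,1].\end{cases}\] Let $d:=-2(\eta-\tfrac12)(6\eta+1)+\frac{2-4\eta}{B}+\frac{(4\eta-1)^2}{B^2}$. If $\eta>1/3$ and $d>0$, then \[\mathbb{P}(X\ge t)\le\begin{cases}\dfrac{2\eta-t+\frac1B}{t+\frac1B}&\text{if } t\in\bigl(\eta,\tfrac12+\tfrac1{4\eta}(1+\tfrac1B-d^{1/2})\bigr],\\[2mm]\dfrac{2\eta(1-t+\frac1B)}{1+\frac1B}&\text{if } t\in\bigl(\tfrac12+\tfrac1{4\eta}(1+\tfrac1B-d^{1/2}),1\bigr].\end{cases}\] Finally, if $\eta>1/3$ and $d\le0$, then $\mathbb{P}(X\ge t)\le\dfrac{2\eta-t+\frac1B}{t+\frac1B}$.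
   Context: A distribution on $G=\{0,\frac1B,\dots,1\}$ with probability mass function $f$ (write $f_i=f(i/B)$) is unimodal if there is $m\in\{0,\dots,B\}$ with $f_0\le f_1\le\dots\le f_m$ and $f_m\ge f_{m+1}\ge\dots\ge f_B$. *)

From mathcomp Require Import all_boot all_order all_algebra.
Set Implicit Arguments. Unset Strict Implicit. Unset Printing Implicit Defensive.
Import Order.TTheory GRing.Theory Num.Theory.
Local Open Scope ring_scope.

(* A distribution on G = {0, 1/B, ..., 1} is given by its pmf f, with
   f i = P(X = i/B) for i = 0..B (values of f outside 0..B are irrelevant). *)
Definition is_pmf (R : numDomainType) (B : nat) (f : nat -> R) : Prop :=
  (forall i, (i <= B)%N -> 0 <= f i) /\ \sum_(i < B.+1) f i = 1.

Definition unimodal (R : numDomainType) (B : nat) (f : nat -> R) : Prop :=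
  exists m : nat, (m <= B)%N /\
    (forall i, (i < m)%N -> f i <= f i.+1) /\
    (forall i, (m <= i)%N -> (i < B)%N -> f i.+1 <= f i).

Definition mean (R : numFieldType) (B : nat) (f : nat -> R) : R :=
  \sum_(i < B.+1) f i * (i%:R / B%:R).

Definition tail_prob (R : numDomainType) (B : nat) (f : nat -> R) (k : nat) : R :=
  \sum_(i < B.+1 | (k <= i)%N) f i.

(* A unimodal distribution on the grid is a mixture of uniform distributions
   on grid intervals containing its mode.  Hence E phi(X) >= 0 holds for every
   unimodal X as soon as it holds for all these uniform distributions.  For
   suitable step weights phi this gives, with t = k/B, b = 1/B and eta = E X,
   P = P(X >= t): either (t + b) P + t - b <= 2 eta or (2 t - b) P <= eta, and,
   when 2 t >= 1 + b, either the former or (1 + b) P <= 2 eta (1 - t + b).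
   The three bounds of the theorem are what these constraints give in the
   respective ranges of t; the range boundaries in the case eta > 1/3 are the
   roots of a quadratic in t whose discriminant is a multiple of d. *)

From mathcomp Require Import all_boot all_order all_algebra.
From mathcomp Require Import ring lra zify.
Import Order.TTheory GRing.Theory Num.Theory.
Local Open Scope ring_scope.

Section UnimodalSums.
Context {R : realFieldType}.
Implicit Types (f phi : nat -> R) (alpha beta gamma c : R).

(* Peeling off the level min (f lo) (f hi) leaves a function that is still
   unimodal around m and vanishes at one end of [lo, hi]. *)
Lemma unimodal_sum_ge0 f phi lo hi m :
  (lo <= m <= hi)%N -> 0 <= f lo -> 0 <= f hi ->
  (forall i j, (lo <= i)%N -> (i <= j <= m)%N -> f i <= f j) ->
  (forall i j, (m <= i <= j)%N -> (j <= hi)%N -> f j <= f i) ->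
  (forall a b, (lo <= a <= m)%N -> (m <= b <= hi)%N ->
     0 <= \sum_(a <= i < b.+1) phi i) ->
  0 <= \sum_(lo <= i < hi.+1) f i * phi i.
Proof.
move=> hm; have [n ehi] : exists n, hi = (lo + n)%N by exists (hi - lo)%N; lia.
move: hm; rewrite {}ehi; clear hi.
elim: n lo f => [|n IH] lo f hm f_lo f_hi up dn phi_ge0.
  rewrite addn0 big_nat1 mulr_ge0 //.
  by have := phi_ge0 lo lo; rewrite big_nat1; apply; lia.
set hi := (lo + n.+1)%N in hm f_hi dn phi_ge0 *.
have shift c : \sum_(lo <= i < hi.+1) f i * phi i =
    c * \sum_(lo <= i < hi.+1) phi i + \sum_(lo <= i < hi.+1) (f i - c) * phi i.
  by rewrite mulr_sumr -big_split; apply: eq_bigr => i _ /=; ring.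
have IHshift c lo' hi' : hi' = (lo' + n)%N -> (lo <= lo')%N -> (hi' <= hi)%N ->
    (lo' <= m <= hi')%N -> c <= f lo' -> c <= f hi' ->
    0 <= \sum_(lo' <= i < hi'.+1) (f i - c) * phi i.
  move=> -> lo_lo' hi'_hi hm' c_lo c_hi; apply: IH; rewrite ?subr_ge0 //.
  - by move=> i j lo_i ij; rewrite lerD2r; apply: up => //; lia.
  - by move=> i j ij j_hi; rewrite lerD2r; apply: dn => //; lia.
  - by move=> a b ha hb; apply: phi_ge0; lia.
have sum_phi_ge0 : 0 <= \sum_(lo <= i < hi.+1) phi i by apply: phi_ge0; lia.
have peel_lo : (lo < m)%N -> f lo <= f hi -> 0 <= \sum_(lo <= i < hi.+1) f i * phi i.
  move=> lo_m f_lohi; rewrite (shift (f lo)) [X in _ + X]big_ltn; last lia.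
  rewrite subrr mul0r add0r addr_ge0 ?mulr_ge0 //.
  by apply: (IHshift _ _ hi) => //; [lia | lia | apply: up; lia].
have peel_hi : (m < hi)%N -> f hi <= f lo -> 0 <= \sum_(lo <= i < hi.+1) f i * phi i.
  move=> m_hi f_hilo; rewrite (shift (f hi)) [X in _ + X]big_nat_recr /=; last lia.
  rewrite subrr mul0r addr0 addr_ge0 ?mulr_ge0 //.
  have hiS : hi = (lo + n).+1 by rewrite /hi addnS.
  rewrite {1}hiS.
  by apply: (IHshift _ lo) => //; [lia | lia | apply: dn; lia].
case: (ltnP lo m) => [lo_m | m_lo]; case: (lerP (f lo) (f hi)) => f_lohi.
- exact: peel_lo.
- apply: peel_hi (ltW f_lohi); rewrite ltnNge; apply/negP => hi_m.
  by have := up lo hi (leqnn _) ltac:(lia); rewrite leNgt f_lohi.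
- have f_hilo : f hi <= f lo by apply: dn; lia.
  by apply: peel_hi f_hilo; lia.
- by apply: peel_hi (ltW f_lohi); lia.
Qed.

Lemma sum_affine alpha beta a b : (a <= b)%N ->
  \sum_(a <= i < b) (alpha * i%:R + beta) =
  (b%:R - a%:R) * (alpha * (a%:R + b%:R - 1) / 2 + beta).
Proof.
move=> ab; have [n ->] : exists n, b = (a + n)%N by exists (b - a)%N; lia.
elim: n => [|n IH]; first by rewrite addn0 big_geq // subrr mul0r.
by rewrite addnS big_nat_recr /= ?IH; [rewrite -addn1 !natrD; field | lia].
Qed.

Definition affine_step alpha beta gamma k (i : nat) : R :=
  alpha * i%:R + beta + gamma * (k <= i)%N%:R.

Lemma sum_affine_step alpha beta gamma k a b : (a <= k <= b.+1)%N ->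
  \sum_(a <= i < b.+1) affine_step alpha beta gamma k i =
  (k%:R - a%:R) * (alpha * (a%:R + k%:R - 1) / 2 + beta)
  + (b%:R + 1 - k%:R) * (alpha * (k%:R + b%:R) / 2 + beta + gamma).
Proof.
move=> /andP[ak kb]; rewrite (big_cat_nat (n := k) ak kb) /=.
rewrite (eq_big_nat _ _ (F2 := fun i => alpha * i%:R + beta)); last first.
  by move=> i /andP[_ ik]; rewrite /affine_step leqNgt ik mulr0 addr0.
rewrite [X in _ + X](eq_big_nat _ _ (F2 := fun i => alpha * i%:R + (beta + gamma))); last first.
  by move=> i /andP[ki _]; rewrite /affine_step ki mulr1 addrA.
by rewrite !sum_affine // -addn1 natrD; field.
Qed.

Lemma interval_sum_ge0_mode_ge {k a b m} : (k <= m.+1)%N -> (a <= m <= b)%N ->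
  0 <= \sum_(a <= i < b.+1) affine_step 2 (1 - k%:R) (- (k%:R + 1)) k i.
Proof.
move=> km /andP[am mb]; case: (leqP k a) => [ka | ak].
  rewrite big_nat_cond sumr_ge0 // => i /andP[/andP[ai _] _].
  have ki := leq_trans ka ai; have : (k%:R : R) <= i%:R by rewrite ler_nat.
  by rewrite /affine_step ki mulr1; lra.
rewrite sum_affine_step; last lia.
have a_ge0 : 0 <= (a%:R : R) by [].
have ak' : (a%:R : R) <= k%:R by rewrite ler_nat ltnW.
case: (leqP k b) => [kb | bk].
  have kb' : (k%:R : R) <= b%:R by rewrite ler_nat.
  nra.
have kb1 : k = b.+1 by lia.
rewrite kb1 -addn1 natrD in ak' *; nra.
Qed.

(* The weight is (k - 1 - m) (2 i - 2 c [k <= i]) plus m times the weight of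
   [interval_sum_ge0_mode_ge]; the hypothesis on c is the nonnegativity of the
   interval sum of the former over [0, b]. *)
Lemma interval_sum_ge0_mode_lt {c k a b m} : (m < k)%N -> (a <= m <= b)%N ->
  ((k <= b)%N -> 2 * c * (b%:R - k%:R + 1) <= b%:R * (b%:R + 1)) ->
  0 <= \sum_(a <= i < b.+1) affine_step (2 * (k%:R - 1)) (- (k%:R - 1) * m%:R)
         (- (2 * (k%:R - 1) * c - m%:R * (2 * c - k%:R - 1))) k i.
Proof.
move=> mk /andP[am mb] hc.
have a_ge0 : 0 <= (a%:R : R) by [].
have am' : (a%:R : R) <= m%:R by rewrite ler_nat.
have mb' : (m%:R : R) <= b%:R by rewrite ler_nat.
have mk' : (m%:R : R) + 1 <= k%:R by rewrite natr1 ler_nat.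
case: (ltnP b k) => [bk | kb].
  pose affine (i : nat) : R := 2 * (k%:R - 1) * i%:R - (k%:R - 1) * m%:R.
  rewrite (eq_big_nat _ _ (F2 := affine)); last first.
    by move=> i /andP[_ ik]; rewrite /affine_step leqNgt (leq_trans ik bk) mulr0 addr0 mulNr.
  rewrite sum_affine; last lia.
  rewrite -addn1 natrD; apply: mulr_ge0; first lra.
  have : 0 <= (k%:R - 1) * (a%:R + b%:R - m%:R) :> R by apply: mulr_ge0; lra.
  lra.
have kb' : (k%:R : R) <= b%:R by rewrite ler_nat.
rewrite sum_affine_step; last lia.
have -> : (k%:R - a%:R) * (2 * (k%:R - 1) * (a%:R + k%:R - 1) / 2 + - (k%:R - 1) * m%:R)
    + (b%:R + 1 - k%:R) * (2 * (k%:R - 1) * (k%:R + b%:R) / 2 + - (k%:R - 1) * m%:R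
                           + - (2 * (k%:R - 1) * c - m%:R * (2 * c - k%:R - 1)))
  = (k%:R - 1 - m%:R) * (b%:R * (b%:R + 1) - 2 * c * (b%:R - k%:R + 1))
    + m%:R * ((b%:R + 1 - k%:R) * (b%:R - k%:R))
    + (k%:R - 1) * (a%:R * (m%:R + 1 - a%:R)) by field.
have := hc kb.
have : 0 <= (b%:R + 1 - k%:R) * (b%:R - k%:R) :> R by apply: mulr_ge0; lra.
have : 0 <= a%:R * (m%:R + 1 - a%:R) :> R by apply: mulr_ge0; lra.
nra.
Qed.

End UnimodalSums.

Section UnimodalTail.
Context {R : realFieldType}.
Variables (B : nat) (f : nat -> R).

Definition index_mean : R := \sum_(i < B.+1) f i * i%:R.

Lemma sum_pmf_affine_step alpha beta gamma k : \sum_(i < B.+1) f i = 1 ->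
  \sum_(i < B.+1) f i * affine_step alpha beta gamma k i =
  alpha * index_mean + beta + gamma * tail_prob B f k.
Proof.
move=> f_sum; rewrite -[in RHS](mulr1 beta) -[in RHS]f_sum /index_mean /tail_prob.
rewrite [X in gamma * X]big_mkcond /=.
rewrite !mulr_sumr -!big_split /=; apply: eq_bigr => i _.
by rewrite /affine_step; case: (k <= i)%N; rewrite /= ?mulr1 ?mulr0; ring.
Qed.

Lemma unimodal_pmf_sum_ge0 m phi : (forall i, (i <= B)%N -> 0 <= f i) -> (m <= B)%N ->
  (forall i, (i < m)%N -> f i <= f i.+1) ->
  (forall i, (m <= i)%N -> (i < B)%N -> f i.+1 <= f i) ->
  (forall a b, (a <= m <= b)%N -> (b <= B)%N -> 0 <= \sum_(a <= i < b.+1) phi i) ->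
  0 <= \sum_(i < B.+1) f i * phi i.
Proof.
move=> f_ge0 mB up dn phi_ge0; rewrite -(big_mkord xpredT (fun i => f i * phi i)).
apply: (@unimodal_sum_ge0 _ _ _ _ _ m); rewrite ?f_ge0 //.
- move=> i j _ /andP[ij jm]; apply: (Order.NatMonotonyTheory.nondecn_inP
    (D := [pred i | (i <= m)%N])); rewrite ?inE; try lia.
  + move=> x y _; rewrite inE => ym z /andP[_ zy].
    by rewrite inE (leq_trans (ltnW zy) ym).
  + by move=> x _; rewrite inE; apply: up.
- move=> i j /andP[mi ij] jB; apply: (Order.NatMonotonyTheory.nonincn_inP
    (D := [pred i | (m <= i <= B)%N])); rewrite ?inE; try lia.
  + move=> x y; rewrite !inE => /andP[mx _] /andP[_ yB] z /andP[xz zy].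
    by rewrite inE (leq_trans mx (ltnW xz)) (leq_trans (ltnW zy) yB).
  + by move=> x; rewrite !inE => /andP[mx _] /andP[_ xB]; apply: dn.
- by move=> a b /andP[_ am] /andP[mb bB]; apply: phi_ge0; lia.
Qed.

(* The hypothesis on c says that c P(X >= k) <= E X for X uniform on
   {0, ..., j}. *)
Lemma unimodal_tail_dichotomy k c : is_pmf B f -> unimodal B f ->
  (forall j, (k <= j <= B)%N -> 2 * c * (j%:R - k%:R + 1) <= j%:R * (j%:R + 1)) ->
  (k%:R + 1) * tail_prob B f k + (k%:R - 1) <= 2 * index_mean \/
  c * tail_prob B f k <= index_mean.
Proof.
move=> [f_ge0 f_sum] [m [mB [up dn]]] hc.
have khintchine phi := unimodal_pmf_sum_ge0 m phi f_ge0 mB up dn.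
case: (leqP k m.+1) => km.
  left; have := khintchine _ (fun a b ab _ => interval_sum_ge0_mode_ge km ab).
  by rewrite sum_pmf_affine_step //; lra.
have := khintchine _ (fun a b ab bB => interval_sum_ge0_mode_lt (ltnW km) ab
                        (fun kb => hc b ltac:(lia))).
(* key reads (k - 1 - m) (2 E - 2 c P) + m (2 E - (k + 1) P - (k - 1)) >= 0,
   with k - 1 - m > 0, so one of the two brackets is nonnegative. *)
rewrite sum_pmf_affine_step // => key.
have [h1|h1] := lerP ((k%:R + 1) * tail_prob B f k + (k%:R - 1)) (2 * index_mean).
  by left.
right; rewrite leNgt; apply/negP => h2.
have mk' : (m%:R : R) + 2 <= k%:R by rewrite -[2]/(2%:R) -natrD addn2 ler_nat.
have : 0 <= (m%:R : R) by [].
nra.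
Qed.

End UnimodalTail.

Section Constraints.
Context {R : realFieldType}.
Implicit Types (b t e P : R).

(* What t being a multiple of the mesh b of a grid containing 1 implies. *)
Definition grid_spacing b t : Prop :=
  [/\ t = 0 \/ b <= t, t <= b \/ 2 * b <= t & 2 * t <= 1 \/ 1 + b <= 2 * t].

Definition tail_constraints b t e P : Prop :=
  ((t + b) * P + t - b <= 2 * e \/ (2 * t - b) * P <= e) /\
  (1 + b <= 2 * t -> (t + b) * P + t - b <= 2 * e \/ (1 + b) * P <= 2 * e * (1 - t + b)).

Lemma grid_spacing_nat (B k : nat) : (0 < B)%N -> grid_spacing (1 / B%:R) (k%:R / B%:R : R).
Proof.
move=> B_gt0; have B_neq0 : (B%:R : R) != 0 by rewrite pnatr_eq0 -lt0n.
have scale x y : (x%:R / B%:R <= y%:R / B%:R :> R) = (x <= y)%N.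
  by rewrite ler_pM2r ?invr_gt0 ?ltr0n // ler_nat.
have two n : 2 * (n%:R / B%:R) = (2 * n)%:R / B%:R :> R by rewrite natrM mulrA.
have one : 1 = B%:R / B%:R :> R by rewrite divff.
have one_b : 1 + 1 / B%:R = B.+1%:R / B%:R :> R by rewrite -natr1; field.
rewrite /grid_spacing -[1 / B%:R]/(1%:R / B%:R : R); split.
- by case: k => [|k]; [left; rewrite mul0r | right; rewrite scale].
- by case: (leqP k 1) => k1; [left | right]; rewrite ?two scale.
- case: (leqP (2 * k) B) => kB; [left | right].
    by rewrite two [leRHS]one scale.
  by rewrite one_b two scale.
Qed.

End Constraints.

Section PmfBounds.
Context {R : realFieldType}.
Variables (B : nat) (f : nat -> R).
Hypothesis f_pmf : is_pmf B f.

Let f_ge0 (i : 'I_B.+1) : 0 <= f i. Proof. by case: f_pmf => + _; apply; rewrite -ltnS. Qed.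

Lemma mean_ge0 : 0 <= mean B f.
Proof. by apply: sumr_ge0 => i _; rewrite mulr_ge0 ?divr_ge0. Qed.

Lemma mean_le1 : (0 < B)%N -> mean B f <= 1.
Proof.
move=> B_gt0; case: f_pmf => _ <-; apply: ler_sum => i _.
rewrite ler_piMr // ler_pdivrMr ?ltr0n // mul1r ler_nat -ltnS.
exact: ltn_ord.
Qed.

Lemma tail_prob_ge0 k : 0 <= tail_prob B f k.
Proof. exact: sumr_ge0. Qed.

Lemma tail_prob_le1 k : tail_prob B f k <= 1.
Proof.
case: f_pmf => _ <-; rewrite /tail_prob big_mkcond /=; apply: ler_sum => i _.
by case: (k <= i)%N.
Qed.

End PmfBounds.

Section TailConstraints.
Context {R : realFieldType}.
Variables (B : nat) (f : nat -> R) (k : nat).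
Hypotheses (B_gt0 : (0 < B)%N) (f_pmf : is_pmf B f) (f_unimodal : unimodal B f).

Local Notation t := (k%:R / B%:R : R).
Local Notation b := (1 / B%:R : R).
Local Notation eta := (mean B f).
Local Notation P := (tail_prob B f k).

Let B_neq0 : (B%:R : R) != 0. Proof. by rewrite pnatr_eq0 -lt0n. Qed.

Lemma mean_index_mean : eta = index_mean B f / B%:R.
Proof. by rewrite /mean /index_mean mulr_suml; apply: eq_bigr => i _; rewrite mulrA. Qed.

Lemma scaled_tail_mean_bound :
  (k%:R + 1) * P + (k%:R - 1) <= 2 * index_mean B f -> (t + b) * P + t - b <= 2 * eta.
Proof.
move=> h; rewrite mean_index_mean.
have -> : (t + b) * P + t - b = ((k%:R + 1) * P + (k%:R - 1)) / B%:R by field.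
by rewrite mulrA ler_pM2r // invr_gt0 ltr0n.
Qed.

Lemma tail_constraint_low :
  (t + b) * P + t - b <= 2 * eta \/ (2 * t - b) * P <= eta.
Proof.
have hc j : (k <= j <= B)%N ->
    2 * (2 * k%:R - 1) * (j%:R - k%:R + 1) <= j%:R * (j%:R + 1) :> R.
  move=> _; rewrite -subr_ge0.
  have -> : j%:R * (j%:R + 1) - 2 * (2 * k%:R - 1) * (j%:R - k%:R + 1)
      = (j%:R - 2 * k%:R + 1) * (j%:R - 2 * k%:R + 2) :> R by ring.
  (* a product of two consecutive integers *)
  case: (leqP (2 * k) j.+1) => hj; have := hj; rewrite -(ler_nat R) natrM.
  - by rewrite -addn1 natrD => hj'; apply: mulr_ge0; lra.
  - by rewrite -addn2 natrD => hj'; apply: mulr_le0; lra.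
have [h|h] := unimodal_tail_dichotomy B f k _ f_pmf f_unimodal hc.
  by left; apply: scaled_tail_mean_bound.
right; rewrite mean_index_mean.
have -> : (2 * t - b) * P = (2 * k%:R - 1) * P / B%:R by field.
by rewrite ler_pM2r // invr_gt0 ltr0n.
Qed.

Lemma tail_constraint_high : (k <= B)%N -> 1 + b <= 2 * t ->
  (t + b) * P + t - b <= 2 * eta \/ (1 + b) * P <= 2 * eta * (1 - t + b).
Proof.
move=> kB; have B_gt0' : 0 < (B%:R : R) by rewrite ltr0n.
have -> : 1 + b <= 2 * t = (B%:R + 1 <= 2 * k%:R :> R).
  by rewrite -(ler_pM2r B_gt0') mulrDl mulrA !divfK // mul1r.
move=> kB2; have kB' : (k%:R : R) <= B%:R by rewrite ler_nat.
have gap_gt0 : 0 < B%:R - k%:R + 1 :> R by lra.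
(* c makes the uniform distribution on {0, ..., B} extremal. *)
pose c : R := B%:R * (B%:R + 1) / (2 * (B%:R - k%:R + 1)).
have hc j : (k <= j <= B)%N -> 2 * c * (j%:R - k%:R + 1) <= j%:R * (j%:R + 1).
  move=> /andP[kj jB]; have kj' : (k%:R : R) <= j%:R by rewrite ler_nat.
  rewrite -subr_ge0.
  have -> : j%:R * (j%:R + 1) - 2 * c * (j%:R - k%:R + 1) = (B%:R - j%:R)
      * (k%:R * (k%:R - 1) - (j%:R - k%:R + 1) * (B%:R - k%:R + 1)) / (B%:R - k%:R + 1).
    by rewrite /c; field; rewrite lt0r_neq0.
  apply: divr_ge0 (ltW gap_gt0); case: (ltnP j B) => [jB' | Bj]; last first.
    have -> : j = B by apply/eqP; rewrite eqn_leq jB Bj.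
    by rewrite subrr mul0r.
  have jB'' : (j%:R : R) + 1 <= B%:R by rewrite natr1 ler_nat.
  have : (j%:R - k%:R + 1) * (B%:R - k%:R + 1) <= (k%:R - 1) * (B%:R - k%:R + 1) :> R.
    by apply: ler_wpM2r; lra.
  have : (k%:R - 1) * (B%:R - k%:R + 1) <= (k%:R - 1) * k%:R :> R.
    by apply: ler_wpM2l; lra.
  by move=> *; apply: mulr_ge0; lra.
have [h|h] := unimodal_tail_dichotomy B f k c f_pmf f_unimodal hc.
  by left; apply: scaled_tail_mean_bound.
right; rewrite mean_index_mean.
have -> : (1 + b) * P = c * P * (2 * (B%:R - k%:R + 1)) / B%:R / B%:R.
  by rewrite /c; field; rewrite B_neq0 lt0r_neq0.
have -> : 2 * (index_mean B f / B%:R) * (1 - t + b)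
    = index_mean B f * (2 * (B%:R - k%:R + 1)) / B%:R / B%:R by field.
by rewrite !ler_pM2r ?invr_gt0 ?mulr_gt0.
Qed.

Lemma unimodal_tail_constraints : (k <= B)%N -> tail_constraints b t eta P.
Proof. by move=> kB; split; [exact: tail_constraint_low | exact: tail_constraint_high]. Qed.

End TailConstraints.

Section BoundGap.
Context {R : realFieldType}.
Implicit Types (b t e : R).

Definition disc b e : R :=
  - 2 * (e - 1 / 2) * (6 * e + 1) + (2 - 4 * e) * b + (4 * e - 1) ^+ 2 * b ^+ 2.

(* (t + b) (1 + b) times the first bound minus the third one. *)
Definition bound_gap b t e : R := (2 * e - t + b) * (1 + b) - 2 * e * (1 - t + b) * (t + b).

Lemma bound_gap_disc b t e :
  8 * e * bound_gap b t e = (1 + b + 2 * e - 4 * e * t) ^+ 2 - disc b e.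
Proof. by rewrite /bound_gap /disc; field. Qed.

Lemma disc_le_sqr b e : 0 < b -> b <= 1 -> 1 / 3 < e -> e <= 1 -> disc b e <= (1 + b) ^+ 2.
Proof.
move=> b_gt0 b_le1 e_gt e_le1; rewrite -subr_ge0.
have -> : (1 + b) ^+ 2 - disc b e = 4 * e * ((3 * e - 1) + b * (1 + 2 * b - 4 * e * b)).
  by rewrite /disc; field.
have : 0 <= (1 - e) * (b + 2 * b ^+ 2 / 3) by apply: mulr_ge0; nra.
have : 0 <= (e - 1 / 3) * (2 + b - 2 * b ^+ 2) by apply: mulr_ge0; nra.
nra.
Qed.

Lemma disc_le0 b e : 0 < b -> b <= 1 -> e <= 1 -> 1 + b < 2 * e -> disc b e <= 0.
Proof.
move=> b_gt0 b_le1 e_le1 e_gt.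
pose x := e - (1 + b) / 2.
have -> : disc b e = - (4 * b * (1 + b) * (1 - b ^+ 2) + 8 * (1 + 2 * b) * (1 - b ^+ 2) * x
                        + 4 * (3 - 4 * b ^+ 2) * x ^+ 2).
  by rewrite /x /disc; field.
have x_ge0 : 0 <= x by rewrite /x; lra.
have x_le : x <= (1 - b) / 2 by rewrite /x; lra.
have : 0 <= x * ((1 - b) / 2 - x) by apply: mulr_ge0; lra.
have : 0 <= b * (1 - b) by apply: mulr_ge0; lra.
have : 0 <= x * (1 - b) by apply: mulr_ge0; lra.
nra.
Qed.

Lemma bound_gap_le0_small_mean b t e : 0 <= b -> b <= t -> t <= 1 -> 1 + b <= 2 * t ->
  0 <= e -> e <= 1 / 3 -> bound_gap b t e <= 0.
Proof.
move=> b_ge0 bt t_le1 bt2 e_ge0 e_le.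
have -> : bound_gap b t e =
    2 * ((1 - t) + (t ^+ 2 - b ^+ 2)) * (e - 1 / 3) - (2 * t - 1 - b) * (2 + b - t) / 3.
  by rewrite /bound_gap; field.
have : 0 <= t ^+ 2 - b ^+ 2 by rewrite subr_sqr; apply: mulr_ge0; lra.
have : 0 <= (2 * t - 1 - b) * (2 + b - t) by apply: mulr_ge0; lra.
nra.
Qed.

End BoundGap.

Lemma ler_pdivlM_trans (R : realFieldType) (u v u' v' x : R) : 0 < u -> 0 < u' ->
  u * x <= v -> v * u' <= v' * u -> x <= v' / u'.
Proof.
move=> u_gt0 u'_gt0 ux uv; rewrite ler_pdivlMr // -(ler_pM2l u_gt0) mulrA [u * v']mulrC.
by apply: le_trans uv; rewrite ler_pM2r.
Qed.

Section TailBounds.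
Context {R : rcfType}.
Implicit Types (b t e P : R).

Lemma first_bound_of_mean_bound b t e P : 0 < t + b ->
  (t + b) * P + t - b <= 2 * e -> P <= (2 * e - t + b) / (t + b).
Proof. by move=> tb h; rewrite ler_pdivlMr // mulrC; lra. Qed.

Lemma first_bound_of_low_tail b t e P : 0 < b -> b <= t -> 2 * t <= 3 * e + b ->
  (t + b) * P + t - b <= 2 * e \/ (2 * t - b) * P <= e ->
  P <= (2 * e - t + b) / (t + b).
Proof.
move=> b_gt0 bt bt3 [|h]; first by apply: first_bound_of_mean_bound; lra.
apply: ler_pdivlM_trans h _; [lra | lra |].
have : 0 <= (t - b) * (3 * e + b - 2 * t) by apply: mulr_ge0; lra.
nra.
Qed.

Lemma second_bound b t e P : 0 < b -> b <= t -> 0 <= (t - b) * (2 * t - 3 * e - b) ->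
  (t + b) * P + t - b <= 2 * e \/ (2 * t - b) * P <= e -> P <= e / (2 * t - b).
Proof.
move=> b_gt0 bt h [hP|hP]; last by rewrite ler_pdivlMr 1?mulrC; lra.
by apply: (@ler_pdivlM_trans _ (t + b) (2 * e - t + b)); [lra | lra | lra | nra].
Qed.

Lemma first_bound_of_high_tail b t e P : 0 < b -> 0 <= t -> 0 <= bound_gap b t e ->
  (t + b) * P + t - b <= 2 * e \/ (1 + b) * P <= 2 * e * (1 - t + b) ->
  P <= (2 * e - t + b) / (t + b).
Proof.
move=> b_gt0 t_ge0 gap [|h]; first by apply: first_bound_of_mean_bound; lra.
by apply: ler_pdivlM_trans h _; rewrite /bound_gap in gap; lra.
Qed.

Lemma third_bound b t e P : 0 < b -> 0 <= t -> bound_gap b t e <= 0 ->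
  (t + b) * P + t - b <= 2 * e \/ (1 + b) * P <= 2 * e * (1 - t + b) ->
  P <= 2 * e * (1 - t + b) / (1 + b).
Proof.
move=> b_gt0 t_ge0 gap [h|]; last by rewrite ler_pdivlMr 1?mulrC; lra.
by apply: (@ler_pdivlM_trans _ (t + b) (2 * e - t + b)); rewrite /bound_gap in gap; lra.
Qed.

Lemma bound_gap_ge0_disc_le0 b t e : 0 < e -> disc b e <= 0 -> 0 <= bound_gap b t e.
Proof.
move=> e_gt0 d_le0; rewrite -(pmulr_rge0 _ (_ : 0 < 8 * e)) ?bound_gap_disc; last lra.
by have := sqr_ge0 (1 + b + 2 * e - 4 * e * t); lra.
Qed.

Local Notation root b e := (1 / 2 + 1 / (4 * e) * (1 + b - Num.sqrt (disc b e))).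

Lemma bound_gap_ge0_below_root b t e : 0 < e -> 0 <= disc b e -> t <= root b e ->
  0 <= bound_gap b t e.
Proof.
move=> e_gt0 d_ge0 t_le; rewrite -(pmulr_rge0 _ (_ : 0 < 8 * e)) ?bound_gap_disc; last lra.
rewrite -(sqr_sqrtr d_ge0) subr_sqr; have := sqrtr_ge0 (disc b e).
have : 4 * e * t <= 2 * e + 1 + b - Num.sqrt (disc b e).
  have -> : 2 * e + 1 + b - Num.sqrt (disc b e) = 4 * e * root b e by field; lra.
  by rewrite ler_pM2l //; lra.
by move=> *; apply: mulr_ge0; lra.
Qed.

Lemma sqrt_disc_le b e : 0 < b -> b <= 1 -> 1 / 3 < e -> e <= 1 ->
  Num.sqrt (disc b e) <= 1 + b.
Proof.
move=> b_gt0 b_le1 e_gt e_le1; rewrite -(ger0_norm (_ : 0 <= 1 + b)); last lra.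
by rewrite -sqrtr_sqr ler_sqrt ?sqr_ge0 // disc_le_sqr.
Qed.

Lemma half_lt_above_root b t e : 0 < b -> b <= 1 -> 1 / 3 < e -> e <= 1 ->
  root b e < t -> 1 / 2 < t.
Proof.
move=> b_gt0 b_le1 e_gt e_le1; apply: le_lt_trans.
rewrite lerDl mulr_ge0 ?divr_ge0 //; first lra.
by have := sqrt_disc_le b e b_gt0 b_le1 e_gt e_le1; lra.
Qed.

Lemma bound_gap_le0_above_root b t e : 0 < b -> b <= 1 -> 1 / 3 < e -> e <= 1 ->
  0 < disc b e -> root b e < t -> t <= 1 -> bound_gap b t e <= 0.
Proof.
move=> b_gt0 b_le1 e_gt e_le1 d_gt0 t_gt t_le1.
have e_large : 2 * e <= 1 + b.
  by rewrite leNgt; apply/negP => /(disc_le0 b e b_gt0 b_le1 e_le1); lra.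
rewrite -(pmulr_rle0 _ (_ : 0 < 8 * e)) ?bound_gap_disc; last lra.
rewrite -(sqr_sqrtr (ltW d_gt0)) subr_sqr; have := sqrtr_ge0 (disc b e).
have : 2 * e + 1 + b - Num.sqrt (disc b e) < 4 * e * t.
  have -> : 2 * e + 1 + b - Num.sqrt (disc b e) = 4 * e * root b e by field; lra.
  by rewrite ltr_pM2l //; lra.
have : e * t <= e by rewrite ler_piMr //; lra.
by move=> *; apply: mulr_le0_ge0; lra.
Qed.

Lemma tail_bound_small_mean b t e P : 0 < b -> 0 <= e -> 0 <= P -> t <= 1 ->
  grid_spacing b t -> tail_constraints b t e P -> e <= 1 / 3 ->
  (e < t -> t <= Num.min (3 / 2 * e + b / 2) (2 * e) -> P <= (2 * e - t + b) / (t + b)) /\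
  (Num.min (3 / 2 * e + b / 2) (2 * e) < t -> t <= 1 / 2 -> P <= e / (2 * t - b)) /\
  (1 / 2 < t -> t <= 1 -> P <= 2 * e * (1 - t + b) / (1 + b)).
Proof.
move=> b_gt0 e_ge0 P_ge0 t_le1 [t0 t1 t_half] [low high] e_small.
have b_le_t : 0 < t -> b <= t by case: t0 => [->|]; lra.
split; [|split].
- move=> e_lt; rewrite le_min => /andP[t_le _].
  by apply: first_bound_of_low_tail low; [| apply: b_le_t |]; lra.
- rewrite gt_min => t_gt _; have bt : b <= t by apply: b_le_t; case/orP: t_gt; lra.
  apply: second_bound low => //; case/orP: t_gt => t_gt.
    by apply: mulr_ge0; lra.
  by case: t1 => [tb|b2t]; [have -> : t - b = 0 by lra | apply: mulr_ge0]; lra.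
- move=> t_gt _; have bt2 : 1 + b <= 2 * t by case: t_half; lra.
  have bt : b <= t by lra.
  by apply: third_bound (high bt2); [| | apply: bound_gap_le0_small_mean]; lra.
Qed.

Lemma tail_bound_large_mean b t e P : 0 < b -> b <= 1 -> e <= 1 -> 0 <= P -> t <= 1 ->
  grid_spacing b t -> tail_constraints b t e P -> 1 / 3 < e -> 0 < disc b e ->
  (e < t -> t <= root b e -> P <= (2 * e - t + b) / (t + b)) /\
  (root b e < t -> t <= 1 -> P <= 2 * e * (1 - t + b) / (1 + b)).
Proof.
move=> b_gt0 b_le1 e_le1 P_ge0 t_le1 [t0 _ t_half] [low high] e_large d_gt0.
split=> [e_lt t_le | t_gt _].
- have bt : b <= t by case: t0; lra.
  have gap : 0 <= bound_gap b t e.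
    by apply: bound_gap_ge0_below_root (ltW d_gt0) t_le; lra.
  case: t_half => [t_half | bt2]; first by apply: first_bound_of_low_tail low; lra.
  by apply: first_bound_of_high_tail (high bt2); lra.
- have t_half' := half_lt_above_root b t e b_gt0 b_le1 e_large e_le1 t_gt.
  have bt2 : 1 + b <= 2 * t by case: t_half; lra.
  apply: third_bound (high bt2); [lra | lra |].
  exact: bound_gap_le0_above_root.
Qed.

Lemma tail_bound_large_mean_nonpos_disc b t e P : 0 < b -> P <= 1 ->
  grid_spacing b t -> tail_constraints b t e P -> 1 / 3 < e -> disc b e <= 0 ->
  P <= (2 * e - t + b) / (t + b).
Proof.
move=> b_gt0 P_le1 [t0 _ t_half] [low high] e_large d_le0.
have gap : 0 <= bound_gap b t e by apply: bound_gap_ge0_disc_le0 d_le0; lra.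
case: t0 => [-> | bt].
  by rewrite add0r ler_pdivlMr //; have := ler_piMl (ltW b_gt0) P_le1; lra.
case: t_half => [t_half | bt2]; first by apply: first_bound_of_low_tail low; lra.
by apply: first_bound_of_high_tail (high bt2); lra.
Qed.

End TailBounds.

Theorem theorem3 (R : rcfType) (B : nat) (f : nat -> R) (k : nat) :
  (1 <= B)%N -> is_pmf B f -> unimodal B f -> (k <= B)%N ->
  let t : R := k%:R / B%:R in
  let b : R := 1 / B%:R in
  let eta : R := mean B f in
  let P : R := tail_prob B f k in
  let d : R := - 2 * (eta - 1 / 2) * (6 * eta + 1) + (2 - 4 * eta) / B%:R
               + (4 * eta - 1) ^+ 2 / (B%:R ^+ 2) in
  (eta <= 1 / 3 ->
     (eta < t -> t <= Num.min (3 / 2 * eta + 1 / (2 * B%:R)) (2 * eta) ->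
        P <= (2 * eta - t + b) / (t + b)) /\
     (Num.min (3 / 2 * eta + 1 / (2 * B%:R)) (2 * eta) < t -> t <= 1 / 2 ->
        P <= eta / (2 * t - b)) /\
     (1 / 2 < t -> t <= 1 ->
        P <= 2 * eta * (1 - t + b) / (1 + b))) /\
  (1 / 3 < eta -> 0 < d ->
     (eta < t -> t <= 1 / 2 + 1 / (4 * eta) * (1 + b - Num.sqrt d) ->
        P <= (2 * eta - t + b) / (t + b)) /\
     (1 / 2 + 1 / (4 * eta) * (1 + b - Num.sqrt d) < t -> t <= 1 ->
        P <= 2 * eta * (1 - t + b) / (1 + b))) /\
  (1 / 3 < eta -> d <= 0 ->
     P <= (2 * eta - t + b) / (t + b)).
Proof.
move=> B_gt0 f_pmf f_unimodal kB t b eta P d.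
have B_gt0' : 0 < (B%:R : R) by rewrite ltr0n.
have b_gt0 : 0 < b by rewrite divr_gt0.
have b_le1 : b <= 1 by rewrite ler_pdivrMr // mul1r ler1n.
have t_le1 : t <= 1 by rewrite ler_pdivrMr // mul1r ler_nat.
have grid : grid_spacing b t := grid_spacing_nat B k B_gt0.
have tail : tail_constraints b t eta P by exact: unimodal_tail_constraints.
have /andP[e_ge0 e_le1] : 0 <= eta <= 1 by rewrite mean_ge0 ?mean_le1.
have /andP[P_ge0 P_le1] : 0 <= P <= 1 by rewrite tail_prob_ge0 ?tail_prob_le1.
have -> : 1 / (2 * B%:R) = b / 2 by rewrite /b; field; rewrite lt0r_neq0.
have -> : d = disc b eta by rewrite /d /disc /b; field; rewrite lt0r_neq0.
split; [|split].
- exact: tail_bound_small_mean.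
- exact: tail_bound_large_mean.
- exact: tail_bound_large_mean_nonpos_disc.
Qed.
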